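(* Consider the following $n$-round process. In each round $i$, an adversary chooses a probability distribution $\mathcal{D}_i$ on $[0,1]$, possibly depending on the first $i-1$ rounds, and a sample $R_i\sim\mathcal{D}_i$ is drawn. Let $Z_1=1$ and $Z_{i+1}=Z_i-R_iZ_i$ for $i\ge1$, and let $Y=\sum_{i=1}^n Z_i\,\mathbb{E}[R_i]$, where $\mathbb{E}[R_i]$ denotes the mean of $\mathcal{D}_i$. Then for every real $q$ and every adversary strategy, $\Pr[Y>q]\le e\cdot\exp(-q)$. *)

From HB Require Import structures.
From mathcomp Require Import all_boot all_order all_algebra.
From mathcomp Require Import all_classical all_reals all_analysis.
From mathcomp Require Import measurable_realfun.

Set Implicit Arguments.
Unset Strict Implicit.
Unset Printing Implicit Defensive.

Import Order.TTheory GRing.Theory Num.Theory.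

Local Open Scope classical_set_scope.
Local Open Scope ring_scope.

(* An adversary strategy: in round i+1 (0-based index i), having seen the
   history h = (R_1, ..., R_i) : i.-tuple R, it picks a probability
   distribution [D i h] on the Borel sets of R.  *)
Definition strategy (R : realType) := forall i : nat, i.-tuple R -> probability R R.

Definition admissible (R : realType) (D : strategy R) : Prop :=
  (forall i (h : i.-tuple R), D i h [set` `[0%R, 1%R]] = 1%E) /\
  (forall i (B : set R), measurable B ->
     measurable_fun [set: i.-tuple R] (fun h : i.-tuple R => D i h B)).

Definition dmean (R : realType) (mu : probability R R) : R :=
  fine (\int[mu]_x (x%:E))%E.

(* [prob_gt D q k i h z y] is the conditional probability, given that the
   history so far is h (i rounds played) with current value Z_{i+1} = z and
   partial sum y = \sum_{j<=i} Z_j E[R_j], that after k more rounds the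
   final Y exceeds q.  It is the iterated-kernel (Ionescu-Tulcea) integral:
   in round i+1 the sample r ~ D i h is drawn, Z is updated to z - r z and
   Y accumulates z * E[R_{i+1}]. *)
Fixpoint prob_gt (R : realType) (D : strategy R) (q : R) (k : nat)
  (i : nat) (h : i.-tuple R) (z y : R) {struct k} : \bar R :=
  match k with
  | 0 => if (q < y)%R then 1%E else 0%E
  | k'.+1 =>
      (\int[D i h]_r
         prob_gt D q k' [tuple of rcons h r] (z - r * z) (y + z * dmean (D i h)))%E
  end.

Definition probY_gt (R : realType) (D : strategy R) (n : nat) (q : R) : \bar R :=
  prob_gt D q n [tuple] 1 0.

From HB Require Import structures.
From mathcomp Require Import all_boot all_order all_algebra.
From mathcomp Require Import all_classical all_reals all_analysis.
From mathcomp Require Import measurable_realfun.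
From mathcomp Require Import ring lra.

(* Proof by a potential function.  For the current state (Z, partial sum) =
   (z, y) with z > 0, let t = (q - y) / z; the potential is 1 if t < 1 and
   e^(1 - t) otherwise, so that it dominates the indicator of [Y > q] at the
   end (where z may be 0) and equals e * e^(-q) initially.  One round replaces
   t by c / (1 - r) with c = t - m, m the mean of the distribution; the convex
   map s |-> min(1, e^(1 - c/s)) on (0, 1] lies below a line a s through the
   origin, whose mean a (1 - m) is at most e^(1 - t).  Hence the potential is
   a supermartingale whatever the adversary does. *)

Import Order.TTheory GRing.Theory Num.Theory.
Local Open Scope ring_scope.

Section exp_inequalities.
Context {R : realType}.
Implicit Types c m s x : R.

Lemma le_expR_subr1 x : x <= expR (x - 1).
Proof. by have := expR_ge1Dx (x - 1); rewrite addrC subrK. Qed.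

(* Slope of a line through the origin above s |-> e^(1 - c/s) on (0, 1]:
   the chord to (1, e^(1 - c)) when c >= 1, by convexity, and 1/c otherwise,
   from x <= e^(x - 1). *)
Definition chord_slope c := if 1 <= c then expR (1 - c) else c^-1.

Lemma chord_slope_ge0 c : 0 < c -> 0 <= chord_slope c.
Proof.
by move=> c0; rewrite /chord_slope; case: ifP => _; rewrite ?expR_ge0 ?invr_ge0 ?ltW.
Qed.

Lemma expR_1Bdiv_le_div c s : 0 < c -> 0 < s -> expR (1 - c / s) <= s / c.
Proof.
move=> c0 s0; have x0 : 0 < c / s by rewrite divr_gt0.
rewrite -(invf_div c s) (_ : 1 - c / s = - (c / s - 1)); last by ring.
rewrite expRN lef_pV2 ?posrE ?expR_gt0 //; exact: le_expR_subr1.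
Qed.

Lemma expR_1Bdiv_le_mul c s : 1 <= c -> 0 < s <= 1 ->
  expR (1 - c / s) <= expR (1 - c) * s.
Proof.
move=> c1 /andP[s0 s1].
have -> : 1 - c / s = (1 - c) + c * (1 - s^-1) by ring.
rewrite expRD ler_wpM2l ?expR_ge0 //.
have s1V : 1 <= s^-1 by rewrite invf_ge1.
have le_s : expR (1 - s^-1) <= s.
  rewrite -[X in _ <= X]invrK (_ : 1 - s^-1 = - (s^-1 - 1)); last by ring.
  rewrite expRN lef_pV2 ?posrE ?invr_gt0 ?expR_gt0 //; exact: le_expR_subr1.
apply: le_trans le_s; rewrite ler_expR -[leRHS]mul1r.
by rewrite ler_wnM2r // subr_le0.
Qed.

Lemma expR_1Bdiv_le_chord c s : 0 < c -> 0 < s <= 1 ->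
  expR (1 - c / s) <= chord_slope c * s.
Proof.
move=> c0 s01; rewrite /chord_slope; case: ifP => c1.
  exact: expR_1Bdiv_le_mul.
by rewrite [_ * s]mulrC; apply: expR_1Bdiv_le_div; case/andP: s01.
Qed.

Lemma chord_slope_mul1B_le c m : 0 < c -> 0 <= m <= 1 -> 1 - m <= c ->
  chord_slope c * (1 - m) <= expR (1 - (c + m)).
Proof.
move=> c0 /andP[m0 m1] mc; rewrite /chord_slope; case: ifPn => c1.
  rewrite (_ : 1 - (c + m) = (1 - c) + - m); last by ring.
  rewrite (expRD (1 - c)); apply: ler_wpM2l; first exact: expR_ge0.
  by have := expR_ge1Dx (- m); lra.
rewrite -ltNge in c1.
have x1 : c^-1 * (1 - m) <= 1 by rewrite mulrC ler_pdivrMr // mul1r.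
apply: (le_trans (le_expR_subr1 _)); rewrite ler_expR.
have -> : 1 - (c + m) = c * (c^-1 * (1 - m) - 1) by field; rewrite gt_eqF.
nra.
Qed.

End exp_inequalities.

Section potential.
Context {R : realType}.
Implicit Types q r z y : R.

(* [z] is the current value of Z and [y] the partial sum.  Negative [z]
   cannot arise from samples in [0, 1]; the value 1 there only keeps the
   potential in [0, 1]. *)
Definition potential q z y : R :=
  if z < 0 then 1 else if z == 0 then (if q < y then 1 else 0)
  else if q < y + z then 1 else expR ((y + z - q) / z).

Lemma potentialN q z y : z < 0 -> potential q z y = 1.
Proof. by rewrite /potential => ->. Qed.

Lemma potential0 q y : potential q 0 y = if q < y then 1 else 0.
Proof. by rewrite /potential ltxx eqxx. Qed.

Lemma potentialP q z y : 0 < z ->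
  potential q z y = if q < y + z then 1 else expR ((y + z - q) / z).
Proof. by move=> z0; rewrite /potential ltNge (ltW z0) /= gt_eqF. Qed.

Lemma potential_ge0 q z y : 0 <= potential q z y.
Proof.
rewrite /potential; case: ifP => // _; case: ifP => _; first by case: ifP.
by case: ifP => // _; exact: expR_ge0.
Qed.

Lemma potential_le1 q z y : potential q z y <= 1.
Proof.
rewrite /potential; case: ltgtP => [//|z0|_]; last by case: ifP.
case: ifPn => //; rewrite -leNgt => yzq.
by rewrite expR_le1 pmulr_lle0 ?invr_gt0 // subr_le0.
Qed.

Lemma potential_ge_indicator q z y :
  (if q < y then 1 else 0) <= potential q z y.
Proof.
case: ifPn => [qy|_]; last exact: potential_ge0.
case: (ltgtP z 0) => [z0|z0|->]; first by rewrite potentialN.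
  by rewrite potentialP // (lt_trans qy) // ltrDl.
by rewrite potential0 qy.
Qed.

Lemma potential_le_expR q z y : 0 < z -> potential q z y <= expR ((y + z - q) / z).
Proof.
move=> z0; rewrite potentialP //; case: ltP => // qyz.
rewrite -[leLHS]addr0 (le_trans _ (expR_ge1Dx _)) // lerD2l.
by apply: divr_ge0; rewrite ?subr_ge0 ltW.
Qed.

(* One round with sample [r] and mean [m] maps t = (q - y) / z to
   (t - m) / (1 - r); when the target is not yet reached the new potential
   lies below the line of [chord_slope]. *)
Lemma potential_step_le q z y m r : 0 < z -> y + z <= q -> m <= 1 ->
  0 < (q - y) / z - m -> 0 <= r <= 1 ->
  potential q (z - r * z) (y + z * m) <= chord_slope ((q - y) / z - m) * (1 - r).
Proof.
move=> z0 yzq m1 c0 /andP[r0 r1]; case: (eqVneq r 1) => [->|r_neq1].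
  rewrite mul1r subrr potential0 subrr mulr0; case: ltP => // hq.
  suff : z * m <= z by lra.
  by rewrite ler_piMr // ltW.
have s0 : 0 < 1 - r by rewrite subr_gt0 lt_neqAle r_neq1.
rewrite (_ : z - r * z = z * (1 - r)); last by ring.
apply: le_trans (potential_le_expR _ _ _ _) _; first exact: mulr_gt0.
have -> : (y + z * m + z * (1 - r) - q) / (z * (1 - r)) = 1 - ((q - y) / z - m) / (1 - r).
  by field; rewrite !gt_eqF.
by apply: expR_1Bdiv_le_chord => //; rewrite s0 lerBlDr lerDl.
Qed.

End potential.

Section nonneg_integral.
Context d (T : measurableType d) (R : realType).
Local Open Scope ereal_scope.

(* The integrands of [prob_gt] are not known to be measurable, so
   [ge0_le_integral] does not apply; monotonicity holds anyway because a
   nonnegative integral is a supremum over simple functions below it. *)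
Lemma ge0_le_integral_any (mu : measure T R) (f g : T -> \bar R) :
  (forall x, 0 <= f x) -> (forall x, f x <= g x) ->
  \int[mu]_x f x <= \int[mu]_x g x.
Proof.
move=> f0 fg; have g0 x : 0 <= g x by apply: le_trans (fg x).
rewrite (ge0_integralE _ (fun x _ => f0 x)) (ge0_integralE _ (fun x _ => g0 x)).
apply: ereal_sup_le => _ [h hf <-]; exists h => //= x.
by apply: le_trans (hf x) _; rewrite !patchE; case: ifP.
Qed.

Lemma integral_le1 (P : probability T R) (g : T -> R) :
  (forall x, 0 <= g x <= 1)%R -> \int[P]_x (g x)%:E <= 1.
Proof.
move=> g01; have -> : 1 = \int[P]_x cst 1 x.
  by rewrite integral_cst // mul1e; apply/esym; exact: probability_setT.
by apply: ge0_le_integral_any => x; rewrite lee_fin; case/andP: (g01 x).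
Qed.

End nonneg_integral.

Section clamp01.
Context {R : realType}.
Implicit Types r : R.

Definition clamp01 r : R := Order.min (Order.max r 0) 1.

Lemma clamp01_ge0 r : 0 <= clamp01 r.
Proof. by rewrite le_min ler01 le_max lexx orbT. Qed.

Lemma clamp01_le1 r : clamp01 r <= 1.
Proof. by rewrite ge_min lexx orbT. Qed.

Lemma clamp01_id r : r \in `[0, 1] -> clamp01 r = r.
Proof.
by rewrite in_itv /= => /andP[r0 r1]; rewrite /clamp01 (max_idPl r0) (min_idPl r1).
Qed.

Lemma measurable_clamp01 : measurable_fun setT clamp01.
Proof.
have -> : clamp01 = (id \max cst 0) \min cst 1 by [].
apply: measurable_minr; last exact: measurable_cst.
by apply: measurable_maxr; [exact: measurable_id | exact: measurable_cst].
Qed.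

End clamp01.

Section concentrated_on_unit_interval.
Local Open Scope classical_set_scope.
Local Open Scope ring_scope.
Context {R : realType} (mu : probability R R).
Hypothesis mu01 : mu [set` `[0%R, 1%R]] = 1%E.

Let out01 : set R := ~` [set` `[0%R, 1%R]].

Let measurable_out01 : measurable out01.
Proof. by apply: measurableC; exact: measurable_itv. Qed.

Let mu_out01 : mu out01 = 0%E.
Proof. by rewrite /out01 probability_setC ?mu01 ?subee //; exact: measurable_itv. Qed.

Let measurable_EFin_clamp01 : measurable_fun setT (fun x : R => (clamp01 x)%:E).
Proof. by apply/measurable_EFinP; exact: measurable_clamp01. Qed.

Lemma integral_clamp01 : (\int[mu]_x (clamp01 x)%:E)%E = (dmean mu)%:E.
Proof.
have clamp_ae : (\int[mu]_x (clamp01 x)%:E = \int[mu]_x x%:E)%E.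
  apply: ae_eq_integral => //; exists out01; split => // x /= + x01.
  by apply; rewrite clamp01_id.
have int_ge0 : (0 <= \int[mu]_x (clamp01 x)%:E)%E.
  by apply: integral_ge0 => x _; rewrite lee_fin clamp01_ge0.
have int_le1 : (\int[mu]_x (clamp01 x)%:E <= 1)%E.
  by apply: integral_le1 => x; rewrite clamp01_ge0 clamp01_le1.
by rewrite /dmean -clamp_ae fineK // ge0_fin_numE // (le_lt_trans int_le1) // ltry.
Qed.

Lemma dmean_itv : 0 <= dmean mu <= 1.
Proof.
rewrite -!lee_fin -integral_clamp01; apply/andP; split.
  by apply: integral_ge0 => x _; rewrite lee_fin clamp01_ge0.
by apply: integral_le1 => x; rewrite clamp01_ge0 clamp01_le1.
Qed.

Lemma integral_1Bclamp01 : (\int[mu]_x (1 - clamp01 x)%:E)%E = (1 - dmean mu)%:E.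
Proof.
have sum1 : (\int[mu]_x ((1 - clamp01 x)%:E + (clamp01 x)%:E) = 1)%E.
  under eq_integral do rewrite -EFinD subrK.
  by rewrite integral_cst // mul1e; exact: probability_setT.
rewrite ge0_integralD // in sum1; last 3 first.
- by move=> x ?; rewrite lee_fin subr_ge0 clamp01_le1.
- by apply/measurable_EFinP/measurable_funB => //; exact: measurable_clamp01.
- by move=> x ?; rewrite lee_fin clamp01_ge0.
by rewrite integral_clamp01 in sum1; rewrite -[LHS](@addeK _ (dmean mu)%:E) // sum1 EFinB.
Qed.

(* Off [0, 1], where [mu] has no mass, the indicator makes the bound
   dominate every function with values in [0, 1]. *)
Lemma integral_line_bound (a : R) : 0 <= a ->
  (\int[mu]_x ((a * (1 - clamp01 x))%:E + (\1_out01 x)%:E) =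
   (a * (1 - dmean mu))%:E)%E.
Proof.
move=> a0; have c0 (x : R) : 0 <= 1 - clamp01 x by rewrite subr_ge0 clamp01_le1.
have mline : measurable_fun setT (fun x => 1 - @clamp01 R x).
  by apply: measurable_funB => //; exact: measurable_clamp01.
rewrite ge0_integralD //; last 3 first.
- by move=> x ?; rewrite lee_fin mulr_ge0.
- by apply/measurable_EFinP; exact: measurable_funM.
- by apply/measurable_EFinP; exact: measurable_indic.
rewrite integral_indic // setIT.
rewrite [X in (_ + X)%E](_ : _ = 0%E) ?adde0; last exact: mu_out01.
under eq_integral do rewrite EFinM.
rewrite ge0_integralZl_EFin ?integral_1Bclamp01 // => [x ?|].
  by rewrite lee_fin.
exact/measurable_EFinP.
Qed.

Lemma potential_step_le_line q z y r : 0 < z -> y + z <= q ->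
  0 < (q - y) / z - dmean mu ->
  potential q (z - r * z) (y + z * dmean mu) <=
  chord_slope ((q - y) / z - dmean mu) * (1 - clamp01 r) + \1_out01 r.
Proof.
move=> z0 yzq c0; have /andP[_ m1] := dmean_itv; rewrite indicE.
case: (boolP (r \in `[0, 1])) => r01.
  rewrite clamp01_id // memNset ?addr0; last by rewrite /out01 /= => /(_ r01).
  by apply: potential_step_le => //; rewrite in_itv /= in r01.
rewrite mem_set; last by move=> r01'; move/negP: r01; apply.
rewrite -[leLHS]add0r lerD ?potential_le1 // mulr_ge0 ?chord_slope_ge0 //.
by rewrite subr_ge0 clamp01_le1.
Qed.

Lemma integral_potential_step q z y :
  (\int[mu]_r (potential q (z - r * z) (y + z * dmean mu))%:E <=
   (potential q z y)%:E)%E.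
Proof.
have /andP[m0 m1] := dmean_itv.
have int_le1 : (\int[mu]_r (potential q (z - r * z) (y + z * dmean mu))%:E <= 1)%E.
  by apply: integral_le1 => r; rewrite potential_ge0 potential_le1.
case: (ltgtP z 0) => [z0|z0|->]; first by rewrite potentialN.
  case: (ltP q (y + z)) => yzq; first by rewrite potentialP // yzq.
  rewrite potentialP // ltNge yzq /=.
  have t1 : 1 <= (q - y) / z by rewrite ler_pdivlMr // mul1r; lra.
  have -> : (y + z - q) / z = 1 - (((q - y) / z - dmean mu) + dmean mu).
    by rewrite subrK; field; rewrite gt_eqF.
  case: (leP ((q - y) / z - dmean mu) 0) => c0.
    by apply: le_trans int_le1 _; rewrite lee_fin -[leLHS]expR0 ler_expR; lra.
  set a := chord_slope ((q - y) / z - dmean mu).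
  apply: (@le_trans _ _ (\int[mu]_r ((a * (1 - clamp01 r))%:E + (\1_out01 r)%:E))%E).
    apply: ge0_le_integral_any => r; first by rewrite lee_fin potential_ge0.
    by rewrite -EFinD lee_fin; exact: potential_step_le_line.
  rewrite integral_line_bound ?chord_slope_ge0 // lee_fin.
  by apply: chord_slope_mul1B_le; [lra | exact: dmean_itv | lra].
under eq_integral do rewrite mulr0 subr0 mul0r addr0.
rewrite integral_cst // [X in (_ * X)%E](_ : _ = 1%E) ?mule1 //; exact: probability_setT.
Qed.

End concentrated_on_unit_interval.

Section adversary.
Local Open Scope classical_set_scope.
Local Open Scope ring_scope.
Context {R : realType} {D : strategy R}.
Hypothesis D01 : forall i (h : i.-tuple R), D i h [set` `[0%R, 1%R]] = 1%E.

Lemma prob_gt_ge0 q k i (h : i.-tuple R) z y : (0 <= prob_gt D q k h z y)%E.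
Proof.
elim: k i h z y => [|k IHk] i h z y /=; first by case: ifP.
by apply: integral_ge0 => r _; exact: IHk.
Qed.

Lemma prob_gt_le_potential q k i (h : i.-tuple R) z y :
  (prob_gt D q k h z y <= (potential q z y)%:E)%E.
Proof.
elim: k i h z y => [|k IHk] i h z y /=.
  by have := potential_ge_indicator q z y; case: ifP; rewrite lee_fin.
apply: le_trans _ (integral_potential_step _ (D01 _ h) q z y).
by apply: ge0_le_integral_any => r; [exact: prob_gt_ge0 | exact: IHk].
Qed.

End adversary.

Theorem mainTheorem15 (R : realType) (n : nat) (D : strategy R) (q : R) :
  admissible D ->
  (probY_gt D n q <= (expR 1 * expR (- q))%:E)%E.
Proof.
move=> [D01 _]; apply: le_trans (prob_gt_le_potential D01 q n _ [tuple] 1 0) _.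
rewrite potentialP ?ltr01 // add0r divr1 lee_fin -expRD.
case: ltP => // q1; rewrite -[leLHS]expR0 ler_expR; lra.
Qed.
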